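(* A descriptive $\mathsf{MS4}$-frame $\mathfrak{G}=(Y,R,E)$ validates $\mathsf{LKur}=\mathsf{MS4}+\Box\forall\Diamond\Box p\to\Diamond\forall p$ if and only if it satisfies the local Kuroda principle: for every $x\in\operatorname{qmax}Y$ there is $y$ with $xE_Ry$ such that $E[y]\subseteq\operatorname{qmax}Y$.
   Context: $\mathsf{MS4}$ is the smallest set of formulas in the classical bimodal language $\mathcal{L}_{\Box\forall}$ containing all classical tautologies, the $\mathsf{S4}$ axioms for $\Box$, the $\mathsf{S5}$ axioms for $\forall$, and $\Box\forall p\to\forall\Box p$, closed under modus ponens, substitution, $\Box$- and $\forall$-necessitation; $\Diamond=\neg\Box\neg$. A descriptive $\mathsf{MS4}$-frame is a triple $(Y,R,E)$ where $Y$ is a Stone space (compact, Hausdorff, zero-dimensional), $R$ is a quasi-order and $E$ an equivalence relation on $Y$, both continuous (i.e., the image $R[x]=\{y:xRy\}$ is closed for each $x$ and $R^{-1}[U]$ is clopen for each clopen $U$; same for $E$), and $xEy$, $yRz$ imply there is $u$ with $xRu$ and $uEz$. Formulas are evaluated under valuations assigning clopen subsets to letters, $\Box$ via $R$, $\forall$ via $E$; validity means truth everywhere under all such valuations. $\operatorname{qmax}Y=\{x: xRy\Rightarrow yRx\}$ is the set of quasi-maximal points; $xE_Ry$ iff $xRy$ and $yRx$. *)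

From HB Require Import structures.
From mathcomp Require Import all_boot all_order.
From mathcomp Require Import all_classical topology.
Set Implicit Arguments. Unset Strict Implicit. Unset Printing Implicit Defensive.
Local Open Scope classical_set_scope.

Inductive form : Type :=
  | Var : nat -> form
  | Bot : form
  | Imp : form -> form -> form
  | Box : form -> form
  | All : form -> form.

Definition Neg (a : form) := Imp a Bot.
Definition Top := Neg Bot.
Definition Dia (a : form) := Neg (Box (Neg a)).
Definition Ex (a : form) := Neg (All (Neg a)).

(** Classical tautologies: formulas true under every boolean valuation of
    their maximal non-propositional subformulas (variables, Box-, All-formulas)
    i.e. substitution instances of propositional tautologies. *)
Fixpoint beval (v : form -> bool) (a : form) : bool :=
  match a with
  | Bot => false
  | Imp a b => (~~ beval v a) || beval v b
  | _ => v a
  end.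
Definition tautology (a : form) := forall v : form -> bool, beval v a.

Fixpoint subst (s : nat -> form) (a : form) : form :=
  match a with
  | Var n => s n
  | Bot => Bot
  | Imp a b => Imp (subst s a) (subst s b)
  | Box a => Box (subst s a)
  | All a => All (subst s a)
  end.

Definition p0 := Var 0.
Definition p1 := Var 1.

Inductive MS4_axiom : form -> Prop :=
  | ax_taut a : tautology a -> MS4_axiom a
  | ax_boxK : MS4_axiom (Imp (Box (Imp p0 p1)) (Imp (Box p0) (Box p1)))
  | ax_boxT : MS4_axiom (Imp (Box p0) p0)
  | ax_box4 : MS4_axiom (Imp (Box p0) (Box (Box p0)))
  | ax_allK : MS4_axiom (Imp (All (Imp p0 p1)) (Imp (All p0) (All p1)))
  | ax_allT : MS4_axiom (Imp (All p0) p0)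
  | ax_all5 : MS4_axiom (Imp (Ex p0) (All (Ex p0)))
  | ax_comm : MS4_axiom (Imp (Box (All p0)) (All (Box p0))).

Definition lkur_axiom : form := Imp (Box (All (Dia (Box p0)))) (Dia (All p0)).

Inductive LKur : form -> Prop :=
  | LKur_ax a : MS4_axiom a -> LKur a
  | LKur_kur : LKur lkur_axiom
  | LKur_mp a b : LKur (Imp a b) -> LKur a -> LKur b
  | LKur_subst s a : LKur a -> LKur (subst s a)
  | LKur_nec_box a : LKur a -> LKur (Box a)
  | LKur_nec_all a : LKur a -> LKur (All a).

Definition image {Y : Type} (R : Y -> Y -> Prop) (x : Y) : set Y := [set y | R x y].
Definition preimage {Y : Type} (R : Y -> Y -> Prop) (U : set Y) : set Y :=
  [set x | exists2 y, U y & R x y].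

Definition continuous_rel {Y : topologicalType} (R : Y -> Y -> Prop) :=
  (forall x, closed (image R x)) /\
  (forall U : set Y, clopen U -> clopen (preimage R U)).

Definition stone_space (Y : topologicalType) :=
  [/\ compact [set: Y], hausdorff_space Y & zero_dimensional Y].

Definition quasi_order {Y : Type} (R : Y -> Y -> Prop) :=
  (forall x, R x x) /\ (forall x y z, R x y -> R y z -> R x z).

Definition equivalence_rel {Y : Type} (E : Y -> Y -> Prop) :=
  [/\ (forall x, E x x), (forall x y, E x y -> E y x)
     & (forall x y z, E x y -> E y z -> E x z)].

Definition descriptive_MS4_frame (Y : topologicalType) (R E : Y -> Y -> Prop) :=
  [/\ stone_space Y, quasi_order R, equivalence_rel E,
      (continuous_rel R /\ continuous_rel E)
    & (forall x y z, E x y -> R y z -> exists2 u, R x u & E u z)].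

Fixpoint sat {Y : Type} (R E : Y -> Y -> Prop) (V : nat -> set Y)
    (x : Y) (a : form) : Prop :=
  match a with
  | Var n => V n x
  | Bot => False
  | Imp a b => sat R E V x a -> sat R E V x b
  | Box a => forall y, R x y -> sat R E V y a
  | All a => forall y, E x y -> sat R E V y a
  end.

Definition valid_in {Y : topologicalType} (R E : Y -> Y -> Prop) (a : form) :=
  forall V : nat -> set Y, (forall n, clopen (V n)) ->
  forall x : Y, sat R E V x a.

Definition validates_LKur {Y : topologicalType} (R E : Y -> Y -> Prop) :=
  forall a, LKur a -> valid_in R E a.

Definition qmax {Y : Type} (R : Y -> Y -> Prop) : set Y :=
  [set x | forall y, R x y -> R y x].

Definition ER {Y : Type} (R : Y -> Y -> Prop) (x y : Y) := R x y /\ R y x.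

Definition local_Kuroda {Y : Type} (R E : Y -> Y -> Prop) :=
  forall x, qmax R x -> exists y, ER R x y /\ image E y `<=` qmax R.

From Pilot Require Import Defs.
From mathcomp Require Import all_boot all_classical topology.
Set Implicit Arguments. Unset Strict Implicit. Unset Printing Implicit Defensive.
Local Open Scope classical_set_scope.

(* Above every point there is a quasi-maximal one (Zorn's lemma, with chains
   bounded by compactness since the sets R[x] are closed).  Soundness: if
   E[y] lies in qmax Y, then at every w in E[y] the formula <>[]p forces p,
   because every R-successor of w sees w back.  Completeness: for a clopen U
   containing qmax Y, the premise of the axiom holds everywhere under the
   valuation p := U, so some z in R[x] has E[z] inside U; these closed sets are directed,
   so compactness yields one z for all such U, and qmax Y is the
   intersection of the clopen sets containing it. *)

Lemma compact_directed_bigcap (Y : topologicalType) (I : Type) (D : set I)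
    (f : I -> set Y) :
  compact [set: Y] -> (forall i, D i -> closed (f i)) ->
  (forall i, D i -> f i !=set0) ->
  (forall i j, D i -> D j -> exists2 k, D k & f k `<=` f i `&` f j) ->
  (exists i, D i) -> \bigcap_(i in D) f i !=set0.
Proof.
move=> cpt clf nef dirf neD.
have Ff : Filter (filter_from D f) by apply: filter_from_filter.
have [p [_ clp]] := cpt _ (filter_from_proper Ff nef) filterT.
exists p => i Di; apply: (clf _ Di) => N Np.
by apply: clp => //; exists i.
Qed.

(* The library's [clopenC] takes a spurious set argument. *)
Lemma clopen_setC (Y : topologicalType) (A : set Y) : clopen A -> clopen (~` A).
Proof. exact: clopenC A. Qed.

Lemma stone_separation (Y : topologicalType) (K : set Y) (w : Y) :
  stone_space Y -> closed K -> ~ K w ->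
  exists U, [/\ clopen U, K `<=` U & ~ U w].
Proof.
move=> [cpt hY zdY] clK Kw.
have Kcw : nbhs w (~` K) by apply: open_nbhs_nbhs; split => //; exact: closed_openC.
have [D [Dw cD] DK] := zero_dimensional_cvg hY zdY cpt Kcw.
exists (~` D); split => //; first exact: clopen_setC.
by move=> y Ky Dy; exact: DK Dy Ky.
Qed.

Definition box {Y : Type} (R : Y -> Y -> Prop) (A : set Y) : set Y :=
  [set x | forall y, R x y -> A y].

Lemma boxE {Y : Type} (R : Y -> Y -> Prop) (A : set Y) :
  box R A = ~` Defs.preimage R (~` A).
Proof.
apply/seteqP; split => [x RA [y Ay /RA //]|x nRA y xy].
by apply: contrapT => Ay; apply: nRA; exists y.
Qed.

Lemma clopen_box (Y : topologicalType) (R : Y -> Y -> Prop) (A : set Y) :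
  continuous_rel R -> clopen A -> clopen (box R A).
Proof. by move=> [_ cR] cA; rewrite boxE; apply/clopen_setC/cR/clopen_setC. Qed.

Lemma qmax_above (Y : topologicalType) (R : Y -> Y -> Prop) :
  compact [set: Y] -> quasi_order R -> (forall x, closed (Defs.image R x)) ->
  forall x, exists2 m, R x m & qmax R m.
Proof.
move=> cpt [Rr Rt] clR x.
pose T := {y : Y | R x y}.
pose le (a b : T) := `[< R (sval a) (sval b) >].
have [|||t tmax] := @ZL_preorder T (exist _ x (Rr x)) le.
- by move=> a; apply/asboolP.
- by move=> a b c /asboolP ab /asboolP bc; apply/asboolP; exact: Rt bc.
- move=> A totA; have [[a0 Aa0]|A0] := pselect (exists a, A a); last first.
    by exists (exist _ x (Rr x)) => a Aa; case: A0; exists a.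
  have [||||y Ay] := @compact_directed_bigcap Y T A (Defs.image R \o sval) cpt.
  + by move=> a _; exact: clR.
  + by move=> a _; exists (sval a); exact: Rr.
  + move=> a b Aa Ab; have [/asboolP ab|/asboolP ba] := totA a b Aa Ab.
    * by exists b => // z bz; split => //; exact: Rt ab bz.
    * by exists a => // z az; split => //; exact: Rt ba az.
  + by exists a0.
  have xy : R x y by apply: Rt (svalP a0) (Ay a0 Aa0).
  by exists (exist _ y xy) => a Aa; apply/asboolP; exact: Ay.
- exists (sval t) => [|w tw]; first exact: svalP.
  have xw : R x w by apply: Rt (svalP t) tw.
  by have /asboolP := tmax (exist _ w xw) (asboolT tw).
Qed.

Lemma qmax_succ {Y : Type} (R : Y -> Y -> Prop) (m t : Y) :
  quasi_order R -> qmax R m -> R m t -> qmax R t.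
Proof. by move=> [_ Rt] qm mt s ts; apply: Rt (qm _ (Rt _ _ _ mt ts)) mt. Qed.

(* Pick v above w not seeing w, a quasi-maximal m above v, and a clopen A
   containing R[m] but not w; then the clopen "<>[]A -> A" contains qmax Y
   but not w. *)
Lemma qmax_separation (Y : topologicalType) (R : Y -> Y -> Prop) (w : Y) :
  stone_space Y -> quasi_order R -> continuous_rel R -> ~ qmax R w ->
  exists U, [/\ clopen U, qmax R `<=` U & ~ U w].
Proof.
move=> st qR cR /existsNP[v /not_implyP[wv vw]].
have [[cpt _ _] [_ Rt]] := (st, qR).
have [m vm qm] := qmax_above cpt qR cR.1 v.
have [A [cA mA Aw]] : exists A, [/\ clopen A, Defs.image R m `<=` A & ~ A w].
  by apply: stone_separation => //; [exact: cR.1 | move=> /(Rt _ _ _ vm)].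
exists (~` Defs.preimage R (box R A) `|` A); split.
- by apply: clopenU => //; apply/clopen_setC/cR.2/clopen_box.
- move=> y qy; have [Ay|nAy] := pselect (A y); [by right | left].
  by move=> [u RAu yu]; exact/nAy/RAu/qy.
- case=> [|//]; apply; exists m; first exact: mA.
  exact: Rt wv vm.
Qed.

Lemma sat_clopen (Y : topologicalType) (R E : Y -> Y -> Prop) (V : nat -> set Y) :
  continuous_rel R -> continuous_rel E -> (forall n, clopen (V n)) ->
  forall a, clopen [set x | sat R E V x a].
Proof.
move=> cR cE cV; elim => [n|||a IH|a IH] /=.
- exact: cV.
- exact: clopen0.
- move=> a IHa b IHb.
  have -> : [set x | sat R E V x a -> sat R E V x b] =
            ~` [set x | sat R E V x a] `|` [set x | sat R E V x b].
    apply/seteqP; split => x /=; last by case=> [nxa /nxa []|xb _].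
    by move=> ab; have [xa|xa] := pselect (sat R E V x a); [right; exact: ab|left].
  by apply: clopenU => //; exact: clopen_setC.
- exact: clopen_box.
- exact: clopen_box.
Qed.

Lemma sat_subst {Y : Type} (R E : Y -> Y -> Prop) (V : nat -> set Y)
    (s : nat -> form) (a : form) (x : Y) :
  sat R E V x (subst s a) <-> sat R E (fun n => [set y | sat R E V y (s n)]) x a.
Proof.
elim: a x => [n||a IHa b IHb|a IH|a IH] x //=.
- by split => ab /IHa /ab /IHb.
- by split => ax y /ax /IH.
- by split => ax y /ax /IH.
Qed.

Lemma sat_tautology {Y : Type} (R E : Y -> Y -> Prop) (V : nat -> set Y)
    (a : form) (x : Y) :
  tautology a -> sat R E V x a.
Proof.
pose v b := `[< sat R E V x b >].
have bevalE b : beval v b = v b.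
  elim: b => //= [|b IHb c IHc]; first by rewrite /v asboolF.
  by rewrite IHb IHc /v asbool_imply implybE.
by move=> /(_ v); rewrite bevalE => /asboolP.
Qed.

Lemma sat_MS4_axiom {Y : Type} (R E : Y -> Y -> Prop) (V : nat -> set Y)
    (a : form) (x : Y) :
  quasi_order R -> Defs.equivalence_rel E ->
  (forall x y z, E x y -> R y z -> exists2 u, R x u & E u z) ->
  MS4_axiom a -> sat R E V x a.
Proof.
move=> [Rr Rt] [Er Es Et] comm; case=> /=.
- by move=> b; exact: sat_tautology.
- by move=> ab a' y xy; exact: ab _ xy (a' _ xy).
- by move=> xa; exact/xa/Rr.
- by move=> xa y xy z yz; exact/xa/(Rt _ _ _ xy yz).
- by move=> ab a' y xy; exact: ab _ xy (a' _ xy).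
- by move=> xa; exact/xa/Er.
- by move=> xa y xy ya; apply: xa => z xz; apply/ya/(Et _ _ _ (Es _ _ xy) xz).
- by move=> xa y xy z yz; have [u xu uz] := comm _ _ _ xy yz; exact: xa _ xu _ uz.
Qed.

Lemma validates_LKurP (Y : topologicalType) (R E : Y -> Y -> Prop) :
  descriptive_MS4_frame R E ->
  validates_LKur R E <-> valid_in R E lkur_axiom.
Proof.
move=> [_ qR eE [cR cE] comm]; split => [valid|kur a]; first exact: valid LKur_kur.
elim=> {a} [a ax||a b _ IHab _ IHa|s a _ IH|a _ IH|a _ IH] V cV x /=.
- exact: sat_MS4_axiom.
- exact: kur.
- exact: (IHab V cV x (IHa V cV x)).
- by apply/sat_subst/IH => n; exact: sat_clopen.
- by move=> y _; exact: IH.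
- by move=> y _; exact: IH.
Qed.

Lemma lkur_valid_of_local_Kuroda (Y : topologicalType) (R E : Y -> Y -> Prop) :
  descriptive_MS4_frame R E -> local_Kuroda R E -> valid_in R E lkur_axiom.
Proof.
move=> [[cpt _ _] qR _ [cR _] _] lk V _ x /= hyp noDA.
have [_ Rt] := qR.
have [m xm qm] := qmax_above cpt qR cR.1 x.
have [y [[my _] Eyq]] := lk m qm; have xy := Rt _ _ _ xm my.
apply: (noDA y xy) => w yw; apply: contrapT => Vw.
by apply: (hyp y xy w yw) => u wu Bu; exact/Vw/Bu/(Eyq w yw).
Qed.

Lemma local_Kuroda_of_lkur_valid (Y : topologicalType) (R E : Y -> Y -> Prop) :
  descriptive_MS4_frame R E -> valid_in R E lkur_axiom -> local_Kuroda R E.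
Proof.
move=> [st qR _ [cR cE] _] kur x qx; have [cpt _ _] := st.
pose D := [set U : set Y | clopen U /\ qmax R `<=` U].
have meet U : D U -> Defs.image R x `&` box E U !=set0.
  move=> [cU qU]; apply: contrapT => noz.
  apply: (kur (fun=> U) (fun=> cU) x) => [y xy w yw|z xz zU] /=.
  - move=> noBox; have [m wm qm] := qmax_above cpt qR cR.1 w.
    by apply: (noBox m wm) => t mt; exact/qU/(qmax_succ qR qm mt).
  - by apply: noz; exists z.
have [||||z zD] := @compact_directed_bigcap Y _ D
  (fun U => Defs.image R x `&` box E U) cpt.
- by move=> U [cU _]; apply: closedI; [exact: cR.1 | exact: (clopen_box cE cU).2].
- exact: meet.
- move=> U1 U2 [c1 q1] [c2 q2]; exists (U1 `&` U2).
    by split; [exact: clopenI | move=> y qy; split; [exact: q1 | exact: q2]].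
  by move=> y [xy Ey]; split; split => // w /Ey [].
- by exists setT; split; [exact: clopenT | exact: subsetT].
have [xz _] := zD setT (conj clopenT (@subsetT _ _)).
exists z; split; first by split; [| exact: qx].
move=> w zw; apply: contrapT => /(qmax_separation st qR cR) [U [cU qU Uw]].
by have [_ /(_ w zw)] := zD U (conj cU qU).
Qed.

Theorem theorem4p12 (Y : topologicalType) (R E : Y -> Y -> Prop) :
  descriptive_MS4_frame R E ->
  (validates_LKur R E <-> local_Kuroda R E).
Proof.
move=> frame; rewrite validates_LKurP //; split.
- exact: local_Kuroda_of_lkur_valid.
- exact: lkur_valid_of_local_Kuroda.
Qed.
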